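(* Let $\gamma=(\gamma_1,\dots,\gamma_b)$ be a parallel map on $V=V_1\oplus\cdots\oplus V_b$, $V_i\cong(\mathbb F_2)^m$ with $m\ge4$, and $0\gamma=0$. Suppose every $\gamma_i$ is differentially $4$-uniform and satisfies $\hat n(\gamma_i)=0$. If $\gamma$ maps $\mathcal L(W)$ onto a non-trivial partition $\mathcal{LA}_U(W_1|W_2)$, then $W$ and $W_1$ are walls and $W=W_1=W_2$; in particular $\mathcal{LA}_U(W_1|W_2)$ is linear.
   Context: Let $b>1$, $n=mb$, $V=(\mathbb F_2)^n=V_1\oplus\cdots\oplus V_b$, $V_i\cong(\mathbb F_2)^m$. Permutations act on the right. A parallel map is $\gamma\in\mathrm{Sym}(V)$ with $(v_1\oplus\cdots\oplus v_b)\gamma=v_1\gamma_1\oplus\cdots\oplus v_b\gamma_b$, $\gamma_i\in\mathrm{Sym}(V_i)$. A wall is $\bigoplus_{i\in I}V_i$ with $\emptyset\ne I\subsetneq\{1,\dots,b\}$. For $f:(\mathbb F_2)^m\to(\mathbb F_2)^m$, $\hat f_a(x)=f(x+a)+f(x)$; $f$ is differentially $\delta$-uniform if $\delta=\max_{a\ne0,b}|\{x:\hat f_a(x)=b\}|$; and $\hat n(f)=\max_{a\ne0}|\{v\in(\mathbb F_2)^m\setminus\{0\}: \text{the Boolean function } x\mapsto\langle\hat f_a(x),v\rangle \text{ is constant}\}|$, where $\langle\cdot,\cdot\rangle$ is the standard dot product. A permutation maps $\mathcal A$ onto $\mathcal B$ if it sends the blocks of $\mathcal A$ exactly onto those of $\mathcal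 B$; trivial partitions are the singleton partition and $\{V\}$. $\mathcal L(W)=\{W+v:v\in V\}$ (linear partition). For a subspace $U$ of dimension $n-1$ and subspaces $W_1,W_2\subseteq U$, $\mathcal{LA}_U(W_1|W_2)=\{W_1+v:v\in U\}\cup\{(W_2+\bar v)+v:v\in U\}$ for any $\bar v\in V\setminus U$. *)

From HB Require Import structures.
From mathcomp Require Import all_boot all_order all_fingroup all_algebra.
Set Implicit Arguments. Unset Strict Implicit. Unset Printing Implicit Defensive.
Import GRing.Theory.
Local Open Scope ring_scope.

(* V = (F_2)^(m*b) = V_1 (+) ... (+) V_b is modelled as the space of
   b x m matrices over F_2: the i-th row is the component in V_i = (F_2)^m. *)
Definition blk (m : nat) := 'rV['F_2]_m.
Definition Vsp (b m : nat) := 'M['F_2]_(b, m).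

Definition par_map (b m : nat) (g : 'I_b -> {perm blk m}) : Vsp b m -> Vsp b m :=
  fun x => \matrix_(i < b) (g i (row i x) : 'rV['F_2]_m).

Definition fder (m : nat) (f : blk m -> blk m) (a x : blk m) : blk m :=
  f (x + a) + f x.

Definition diff_unif (m : nat) (f : blk m -> blk m) : nat :=
  \max_(a : blk m | a != 0%R) \max_(c : blk m) #|[set x : blk m | (fder f a x == c)%R]|.

Definition dotp (m : nat) (u v : blk m) : 'F_2 := \sum_(j < m) u 0 j * v 0 j.

Definition nhat (m : nat) (f : blk m -> blk m) : nat :=
  \max_(a : blk m | a != 0%R)
    #|[set v : blk m | (v != 0%R) &&
        [forall x : blk m, forall y : blk m,
           dotp (fder f a x) v == dotp (fder f a y) v]]|.

Definition is_wall (b m : nat) (W : {vspace Vsp b m}) : Prop :=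
  exists I : {set 'I_b}, [/\ I != set0, I != setT &
    forall x : Vsp b m, (x \in W) = [forall i, (i \notin I) ==> (row i x == 0)]].

Definition coset (b m : nat) (W : {vspace Vsp b m}) (v : Vsp b m) : {set Vsp b m} :=
  [set x : Vsp b m | x - v \in W].

Definition lin_part (b m : nat) (W : {vspace Vsp b m}) : {set {set Vsp b m}} :=
  [set coset W v | v : Vsp b m].

Definition LA_part (b m : nat) (U W1 W2 : {vspace Vsp b m}) (vbar : Vsp b m)
  : {set {set Vsp b m}} :=
  [set coset W1 v | v in [set v : Vsp b m | v \in U]] :|:
  [set coset W2 (vbar + v) | v in [set v : Vsp b m | v \in U]].

Definition singleton_part (T : finType) : {set {set T}} := [set [set x] | x : T].
Definition whole_part (T : finType) : {set {set T}} := [set [set: T]].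

Definition maps_onto (T : finType) (f : T -> T) (A B : {set {set T}}) : Prop :=
  [set f @: (X : {set T}) | X in A] = B.

From Pilot Require Import Defs.
From HB Require Import structures.
From mathcomp Require Import all_boot all_order all_fingroup all_algebra.
Import GRing.Theory.
Local Open Scope ring_scope.
Set Implicit Arguments. Unset Strict Implicit. Unset Printing Implicit Defensive.

(* gamma sends each block W + p of L(W) onto the block of LA_U(W1|W2) through
   gamma p, a coset of W1 or W2, so gamma(p + w) - gamma(p) lies in that
   direction for w in W.  Take i in the row support of W and w in W with
   a = w_i <> 0; moving only the i-th coordinate y of p, the difference of two
   such vectors is (g_i)^_a(y) - (g_i)^_a(0) placed in V_i.  Since
   nhat(g_i) = 0 these differences span V_i, so V_i lies in U (hence moving
   the i-th coordinate never changes the direction) and in both W1 and W2.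
   Conversely gamma only moves coordinates inside the row support, so W, W1
   and W2 all equal the wall spanned by the V_i over the support. *)

Section CharTwo.
Variable R : nzRingType.
Hypothesis pchar2 : 2%N \in [pchar R].

Lemma oppmx_pchar2 r c (M : 'M[R]_(r, c)) : - M = M.
Proof. by apply/matrixP => i j; rewrite mxE oppr_pchar2. Qed.

End CharTwo.

Lemma oppmxF2 r c (M : 'M['F_2]_(r, c)) : - M = M.
Proof. exact/oppmx_pchar2/pchar_Fp. Qed.

Section Rows.
Variable R : pzSemiRingType.

Lemma row_delta_mul b m (i j : 'I_b) (z : 'rV[R]_m) :
  row j (delta_mx i 0 *m z) = if j == i then z else 0.
Proof.
rewrite rowE mulmxA mul_delta_mx_cond.
by case: eqP => _; rewrite ?mulr0n ?mul0mx // -rowE row_id.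
Qed.

Lemma sum_delta_mul_row b m (x : 'M[R]_(b, m)) :
  x = \sum_i delta_mx i 0 *m row i x.
Proof.
under eq_bigr => i _ do rewrite rowE mulmxA mul_delta_mx.
by rewrite -mulmx_suml -mx1_sum_delta mul1mx.
Qed.

Definition set_row b m (x : 'M[R]_(b, m)) (i : 'I_b) (y : 'rV[R]_m) :=
  \matrix_j (if j == i then y else row j x).

Lemma row_set_row b m (x : 'M[R]_(b, m)) i y j :
  row j (set_row x i y) = if j == i then y else row j x.
Proof. exact: rowK. Qed.

End Rows.

Section Walls.
Variables (F : fieldType) (b m : nat).
Implicit Types (X : {vspace 'M[F]_(b, m)}) (K : {set 'I_b}) (x : 'M[F]_(b, m)).

Definition in_wall K x := [forall i, (i \notin K) ==> (row i x == 0)].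

Lemma in_wallP K x : reflect (forall i, i \notin K -> row i x = 0) (in_wall K x).
Proof.
apply: (iffP forallP) => [h i iK | h i]; last by apply/implyP => /h ->.
exact/eqP/(implyP (h i)).
Qed.

Lemma in_wall_memv X K x :
  (forall i (z : 'rV_m), i \in K -> delta_mx i 0 *m z \in X) -> in_wall K x -> x \in X.
Proof.
move=> KX /in_wallP x_wall; rewrite [x]sum_delta_mul_row; apply: memv_suml => i _.
by have [/KX -> // | /x_wall ->] := boolP (i \in K); rewrite mulmx0 mem0v.
Qed.

Lemma in_wall0 x : in_wall set0 x = (x == 0).
Proof.
apply/in_wallP/eqP => [x0 | -> i _]; last exact: row0.
by apply/row_matrixP => i; rewrite row0 x0 ?inE.
Qed.

End Walls.

Definition row_support (F : finFieldType) b m (X : {vspace 'M[F]_(b, m)}) :=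
  [set i | [exists x, (x \in X) && (row i x != 0)]].

Lemma row_support_wall (F : finFieldType) b m (X : {vspace 'M[F]_(b, m)}) x :
  x \in X -> in_wall (row_support X) x.
Proof.
move=> xX; apply/in_wallP => i; rewrite inE => /existsPn/(_ x).
by rewrite xX => /negPn/eqP.
Qed.

Lemma row_full_memv (F : fieldType) k n (A : 'M[F]_(k, n)) (vT : vectType F)
    (L : {linear 'rV[F]_n -> vT}) (Y : {vspace vT}) :
  row_full A -> (forall r, L (row r A) \in Y) -> forall z, L z \in Y.
Proof.
move=> fullA AY z; have /submxP[w ->] := submx_full z fullA.
rewrite mulmx_sum_row linear_sum; apply: memv_suml => r _.
by rewrite linearZ memvZ.
Qed.

Lemma nhat0_dotp_nonconst m (f : blk m -> blk m) a v :
  nhat f = 0%N -> a != 0 -> v != 0 ->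
  exists y, dotp (fder f a y) v != dotp (fder f a 0) v.
Proof.
move=> nhat0 a0 v0; apply/existsP/contraT => /existsPn const.
suff : (0 < nhat f)%N by rewrite nhat0.
rewrite /nhat (bigD1 a) //= leq_max; apply/orP; left; apply/card_gt0P.
exists v; rewrite inE v0; apply/'forall_forallP => x y.
by rewrite (eqP (negPn (const x))) (eqP (negPn (const y))).
Qed.

(* If the differences f^_a(x) - f^_a(0) did not span, a nonzero column v of
   the cokernel of their matrix would make <f^_a(x), v> independent of x. *)
Lemma nhat0_derivatives_row_full m (f : blk m -> blk m) a :
  nhat f = 0%N -> a != 0 ->
  row_full (\matrix_(k < #|{: blk m}|) (fder f a (enum_val k) - fder f a 0)).
Proof.
set A := \matrix_(k < _) _ => nhat0 a0; rewrite -cokermx_eq0; set C := cokermx A.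
apply: contraT => /matrix0Pn[l [j Clj]].
pose v : blk m := (col j C)^T.
have v0 : v != 0 by apply/matrix0Pn; exists ord0, l; rewrite /v 2!mxE.
suff const y : dotp (fder f a y) v = dotp (fder f a 0) v.
  by have [y] := nhat0_dotp_nonconst nhat0 a0 v0; rewrite const eqxx.
have /matrixP/(_ (enum_rank y) j) := mulmx_coker A; rewrite -/C !mxE => AC0.
apply/eqP; rewrite -subr_eq0 /dotp -sumrB; apply/eqP; rewrite -[RHS]AC0.
by apply: eq_bigr => k _; rewrite /v !mxE enum_rankK mulrBl.
Qed.

Section ParallelMap.
Variables (b m : nat) (g : 'I_b -> {perm blk m}).
Local Notation gamma := (par_map g).

Lemma row_par_map x i : row i (gamma x) = g i (row i x).
Proof. exact: rowK. Qed.

Lemma par_map_inj : injective gamma.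
Proof.
move=> x y gxy; apply/row_matrixP => i.
by apply: (@perm_inj _ (g i)); rewrite -!row_par_map gxy.
Qed.

Lemma par_map_surj y : exists x, gamma x = y.
Proof. by have /codomP[x ->] := injF_onto par_map_inj y; exists x. Qed.

Lemma par_map_set_row p i y :
  gamma (set_row p i y) = gamma p + delta_mx i 0 *m (g i y - g i (row i p)).
Proof.
apply/row_matrixP => j; rewrite linearD /= row_delta_mul !row_par_map row_set_row.
by case: eqP => [-> | _]; rewrite ?addr0 // addrC subrK.
Qed.

Lemma par_map_set_row_diff p i y y' w :
  (gamma (set_row p i y + w) - gamma (set_row p i y)) -
  (gamma (set_row p i y' + w) - gamma (set_row p i y')) =
  delta_mx i 0 *m (fder (g i) (row i w) y - fder (g i) (row i w) y').
Proof.
apply/row_matrixP => j; rewrite row_delta_mul !linearB /= !row_par_map !linearD /=.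
rewrite !row_set_row; case: eqP => [-> | _]; first by rewrite /fder !oppmxF2.
by rewrite -opprD subrr.
Qed.

Lemma derivative_block_memv (X : {vspace Vsp b m}) p i w :
  nhat (g i) = 0%N -> row i w != 0 ->
  (forall y, gamma (set_row p i y + w) - gamma (set_row p i y) \in X) ->
  forall z : blk m, delta_mx i 0 *m z \in X.
Proof.
move=> nhat0 w_i diffX.
apply: row_full_memv (nhat0_derivatives_row_full nhat0 w_i) _ => k.
by rewrite rowK /= -(par_map_set_row_diff p) memvB.
Qed.

End ParallelMap.

Section Cosets.
Variables b m : nat.
Implicit Types (X : {vspace Vsp b m}) (c v : Vsp b m).

Lemma coset_center X v : v \in Defs.coset X v.
Proof. by rewrite inE subrr mem0v. Qed.

Lemma coset_eq X c v : v \in Defs.coset X c -> Defs.coset X c = Defs.coset X v.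
Proof.
rewrite inE => vc; apply/setP => x; rewrite !inE.
by rewrite -(subrKA v) rpredDr.
Qed.

Lemma coset0 v : Defs.coset 0 v = [set v].
Proof. by apply/setP => x; rewrite !inE memv0 subr_eq0. Qed.

Lemma lin_part0 : lin_part (0 : {vspace Vsp b m}) = singleton_part (Vsp b m).
Proof. by apply: eq_imset => v; rewrite coset0. Qed.

Lemma maps_onto_lin_part (f : Vsp b m -> Vsp b m) W X B :
  (forall y, exists x, f x = y) ->
  (forall p, f @: Defs.coset W p = Defs.coset X (f p)) ->
  maps_onto f (lin_part W) B -> B = lin_part X.
Proof.
move=> f_surj f_coset <-; apply/setP => S.
apply/imsetP/imsetP => [[_ /imsetP[p _ ->] ->] | [v _ ->]].
  by exists (f p); rewrite ?f_coset.
have [p <-] := f_surj v; exists (Defs.coset W p); last by rewrite f_coset.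
exact: imset_f.
Qed.

End Cosets.

Section LAPartition.
Variables (b m : nat) (W U W1 W2 : {vspace Vsp b m}) (vbar : Vsp b m).
Hypotheses (sW1U : (W1 <= U)%VS) (sW2U : (W2 <= U)%VS) (vbar_notin_U : vbar \notin U).

Definition LA_dir (x : Vsp b m) := if x \in U then W1 else W2.

Lemma LA_dir_subU x : (LA_dir x <= U)%VS.
Proof. by rewrite /LA_dir; case: ifP. Qed.

Lemma LA_part_blockE S v :
  S \in LA_part U W1 W2 vbar -> v \in S -> S = Defs.coset (LA_dir v) v.
Proof.
rewrite /LA_dir inE => /orP[] /imsetP[c]; rewrite inE => cU -> vS;
  rewrite (coset_eq vS); move: vS; rewrite inE.
  by move=> /(subvP sW1U); rewrite -(rpredDr _ cU) subrK => ->.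
move=> /(subvP sW2U) vcU; suff -> : (v \in U) = false by [].
apply: contraNF vbar_notin_U => vU.
by move: vcU; rewrite rpredBl // rpredDr.
Qed.

Section Image.
Variable f : Vsp b m -> Vsp b m.
Hypothesis f_onto : maps_onto f (lin_part W) (LA_part U W1 W2 vbar).

Lemma image_coset p : f @: Defs.coset W p = Defs.coset (LA_dir (f p)) (f p).
Proof.
apply: LA_part_blockE; last exact/imset_f/coset_center.
by rewrite -f_onto; apply/imset_f/imset_f.
Qed.

Lemma image_coset_diff p w : w \in W -> f (p + w) - f p \in LA_dir (f p).
Proof.
move=> wW; have : f (p + w) \in f @: Defs.coset W p.
  by apply: imset_f; rewrite inE addrAC subrr add0r.
by rewrite image_coset inE.
Qed.

Lemma image_coset_lift p z :
  z \in LA_dir (f p) -> exists2 q, q - p \in W & f q = f p + z.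
Proof.
move=> zX; have : f p + z \in f @: Defs.coset W p.
  by rewrite image_coset inE addrAC subrr add0r.
by case/imsetP=> q; rewrite inE => qp ->; exists q.
Qed.

End Image.

Section ParallelImage.
Variable g : 'I_b -> {perm blk m}.
Hypotheses (gamma0 : par_map g 0 = 0) (nhat0 : forall i, nhat (g i) = 0%N).
Hypothesis gamma_onto : maps_onto (par_map g) (lin_part W) (LA_part U W1 W2 vbar).
Local Notation gamma := (par_map g).
Local Notation K := (row_support W).

Lemma support_block_memU i (z : blk m) : i \in K -> delta_mx i 0 *m z \in U.
Proof.
rewrite inE => /existsP[w /andP[wW w_i]].
apply: (derivative_block_memv (p := 0) (nhat0 i) w_i) z => y.
exact/(subvP (LA_dir_subU _))/(image_coset_diff gamma_onto).
Qed.

Lemma LA_dir_set_row p i y :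
  i \in K -> LA_dir (gamma (set_row p i y)) = LA_dir (gamma p).
Proof. by move=> iK; rewrite /LA_dir par_map_set_row rpredDr // support_block_memU. Qed.

Lemma support_block_mem_dir p i (z : blk m) :
  i \in K -> delta_mx i 0 *m z \in LA_dir (gamma p).
Proof.
move=> iK; have := iK; rewrite inE => /existsP[w /andP[wW w_i]].
apply: (derivative_block_memv (p := p) (nhat0 i) w_i) z => y.
by rewrite -(LA_dir_set_row p y iK) (image_coset_diff gamma_onto).
Qed.

(* x = gamma q - gamma p with q - p in W, and gamma q - gamma p vanishes on
   every row where q and p agree. *)
Lemma LA_dir_wall p x : (x \in LA_dir (gamma p)) = in_wall K x.
Proof.
apply/idP/idP => [x_dir | ]; last exact/in_wall_memv/support_block_mem_dir.
have [q /row_support_wall/in_wallP qp_wall gq] := image_coset_lift gamma_onto x_dir.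
apply/in_wallP => i iK; move/eqP: (qp_wall i iK); rewrite linearB subr_eq0 => /eqP qp_i.
have -> : x = gamma q - gamma p by rewrite gq addrAC subrr add0r.
by rewrite linearB /= !row_par_map qp_i subrr.
Qed.

Lemma W1_wall x : (x \in W1) = in_wall K x.
Proof. by rewrite -(LA_dir_wall 0) /LA_dir gamma0 mem0v. Qed.

Lemma W2_wall x : (x \in W2) = in_wall K x.
Proof.
have [q gq] := par_map_surj g vbar.
by rewrite -(LA_dir_wall q) /LA_dir gq (negbTE vbar_notin_U).
Qed.

Lemma W_wall x : (x \in W) = in_wall K x.
Proof.
apply/idP/idP => [/row_support_wall // | /in_wallP x_wall].
have gx_dir : gamma x \in LA_dir (gamma 0).
  rewrite LA_dir_wall; apply/in_wallP => i iK.
  by rewrite row_par_map x_wall // -(row0 _ m i) -row_par_map gamma0.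
have [q] := image_coset_lift gamma_onto gx_dir.
by rewrite subr0 gamma0 add0r => qW /par_map_inj <-.
Qed.

Lemma row_support_neq0 : LA_part U W1 W2 vbar != singleton_part (Vsp b m) ->
  K != set0.
Proof.
apply: contra => /eqP K0; apply/eqP; rewrite -lin_part0.
have W0 : W = 0%VS by apply/vspaceP => x; rewrite W_wall K0 in_wall0 memv0.
apply: maps_onto_lin_part (par_map_surj g) _ gamma_onto => p.
by rewrite W0 !coset0 imset_set1.
Qed.

Lemma row_support_neqT : K != setT.
Proof.
apply: contraNneq vbar_notin_U => KT; apply: (subvP sW1U).
by rewrite W1_wall; apply/in_wallP => i; rewrite KT inE.
Qed.

Lemma LA_part_linear : LA_part U W1 W2 vbar = lin_part W1.
Proof.
have W1_W2 : W1 = W2 by apply/vspaceP => x; rewrite W1_wall W2_wall.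
apply: maps_onto_lin_part (par_map_surj g) _ gamma_onto => p.
by rewrite (image_coset gamma_onto) /LA_dir -W1_W2 if_same.
Qed.

End ParallelImage.

End LAPartition.

Unset Implicit Arguments.

Theorem lemma3p15 (b m : nat) (g : 'I_b -> {perm blk m})
    (W U W1 W2 : {vspace Vsp b m}) (vbar : Vsp b m) :
  (1 < b)%N -> (4 <= m)%N ->
  par_map g 0 = 0 ->
  (forall i, diff_unif (g i) = 4%N) ->
  (forall i, nhat (g i) = 0%N) ->
  \dim U = (m * b).-1 -> (W1 <= U)%VS -> (W2 <= U)%VS -> vbar \notin U ->
  LA_part U W1 W2 vbar != singleton_part (Vsp b m) ->
  LA_part U W1 W2 vbar != whole_part (Vsp b m) ->
  maps_onto (par_map g) (lin_part W) (LA_part U W1 W2 vbar) ->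
  [/\ is_wall W, is_wall W1, W = W1, W1 = W2 &
      LA_part U W1 W2 vbar = lin_part W1].
Proof.
move=> _ _ gamma0 _ nhat0 _ sW1U sW2U vbar_notin_U not_single _ gamma_onto.
have memW := W_wall sW1U sW2U vbar_notin_U gamma0 nhat0 gamma_onto.
have memW1 := W1_wall sW1U sW2U vbar_notin_U gamma0 nhat0 gamma_onto.
have memW2 := W2_wall sW1U sW2U vbar_notin_U nhat0 gamma_onto.
have W_W1 : W = W1 by apply/vspaceP => x; rewrite memW memW1.
have W1_W2 : W1 = W2 by apply/vspaceP => x; rewrite memW1 memW2.
have wallW : is_wall W.
  exists (row_support W); split => //.
    exact: (row_support_neq0 sW1U sW2U vbar_notin_U gamma0 nhat0 gamma_onto not_single).
  exact: (row_support_neqT sW1U sW2U vbar_notin_U gamma0 nhat0 gamma_onto).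
split => //; first by rewrite -W_W1.
exact: (LA_part_linear sW1U sW2U vbar_notin_U gamma0 nhat0 gamma_onto).
Qed.
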